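(* In Dallal's model parameterized by $(\gamma,U,V)$, the reference prior for the reversed group ordering $\{\gamma\}$ first and then $\{U,V\}$, namely $\pi(\gamma,u,v)=\pi(u,v\mid\gamma)\pi(\gamma)$ with $\pi(u,v\mid\gamma)=\frac{(h_U(u)h_V(v))^{1/2}}{\int_0^1\!\int_0^1 (h_U h_V)^{1/2}\,du\,dv}$ and $\pi(\gamma)$ the normalized version of $\exp\{\tfrac12\int_0^1\!\int_0^1 \pi(u,v\mid\gamma)\log h_\gamma(\gamma,u,v)\,du\,dv\}$ on $(0,1)$, coincides with $$\pi_R(\gamma,u,v)=\frac{\sqrt2}{\pi}\frac{\gamma^{-1/2}(1-\gamma)^{-1/2}}{1+\gamma}\cdot\frac{u^{-1/2}(1-u)^{-1/2}}{B(1/2,1/2)}\cdot\frac{v^{-1/2}(1-v)^{-1/2}}{B(1/2,1/2)},\qquad 0<\gamma,u,v<1 .$$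
   Context: Dallal's model: two independent groups $i=0,1$ with fixed sizes $m_{+0},m_{+1}$; in group $i$ the counts $(m_{0i},m_{1i},m_{2i})$ are trinomial with probabilities $1-(1+\gamma)\lambda_i$, $2\gamma\lambda_i$, $(1-\gamma)\lambda_i$, where $0<\gamma<1$, $0<\lambda_i<1/(1+\gamma)$. Set $U=(1+\gamma)\lambda_0$, $V=(1+\gamma)\lambda_1$, $r=m_{+1}/m_{+0}$. The expected Fisher information in $(\gamma,U,V)$ is diagonal with entries $h_\gamma(\gamma,u,v)=\frac{2m_{+0}(u+rv)}{\gamma(1-\gamma)(1+\gamma)^2}$, $h_U(u)=\frac{m_{+0}}{u(1-u)}$, $h_V(v)=\frac{m_{+1}}{v(1-v)}$. $B$ denotes the Beta function. *)

From Stdlib Require Import Reals Lra.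
Open Scope R_scope.

Definition is_int01 (f : R -> R) (l : R) : Prop :=
  forall eps : R, eps > 0 ->
  exists delta : R, delta > 0 /\
    forall a b : R, 0 < a < delta -> 1 - delta < b < 1 -> a < b ->
      exists pr : Riemann_integrable f a b, Rabs (RiemannInt pr - l) < eps.

Definition is_int2 (g : R -> R -> R) (l : R) : Prop :=
  exists F : R -> R,
    (forall v : R, 0 < v < 1 -> is_int01 (fun u => g u v) (F v)) /\
    is_int01 F l.

(* Expected Fisher information entries in Dallal's model, (gamma,U,V)
   parametrisation; m0 = m_{+0}, m1 = m_{+1}, r = m1/m0. *)
Definition h_gamma (m0 m1 : nat) (g u v : R) : R :=
  2 * INR m0 * (u + (INR m1 / INR m0) * v) / (g * (1 - g) * (1 + g) ^ 2).
Definition h_U (m0 : nat) (u : R) : R := INR m0 / (u * (1 - u)).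
Definition h_V (m1 : nat) (v : R) : R := INR m1 / (v * (1 - v)).

Definition B_half_half : R := PI.

Definition pi_R (g u v : R) : R :=
  (sqrt 2 / PI) * (/ sqrt g * / sqrt (1 - g) / (1 + g))
  * (/ sqrt u * / sqrt (1 - u) / B_half_half)
  * (/ sqrt v * / sqrt (1 - v) / B_half_half).

From Stdlib Require Import Reals Lra.
From Coquelicot Require Import Coquelicot.
Open Scope R_scope.

(* The Fisher information factorises: sqrt (h_U h_V) is sqrt (m0 m1) times the product of the
   Beta(1/2,1/2) kernels u^(-1/2) (1-u)^(-1/2), each of integral PI (primitive asin (2u - 1)), so
   pi(u,v|g) is the product of two arcsine densities.  Since
   ln h_gamma = ln (2 m0) + ln (u + r v) - ln (g (1-g) (1+g)^2), the g-dependence of the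
   averaged log-information splits off as L g = C - ln (g (1-g) (1+g)^2).  The constant C is
   finite because |ln (u + r v)| <= const - ln v and the arcsine weight times -ln v is dominated
   by an integrable v^(-3/4).  Hence exp (L g / 2) is proportional to g^(-1/2) (1-g)^(-1/2) / (1+g),
   whose integral is PI / sqrt 2 (primitive sqrt 2 asin (sqrt (2g / (1+g)))), and C cancels
   in the normalisation. *)

Definition is_RInt01 (f : R -> R) (l : R) : Prop :=
  is_RInt_gen f (at_right 0) (at_left 1) l.

Definition continuous01 (f : R -> R) : Prop :=
  forall x, 0 < x < 1 -> continuous f x.

Lemma at_right_0_interval d : 0 < d -> at_right 0 (fun a => 0 < a < d).
Proof.
  intros Hd. exists (mkposreal d Hd). intros a Ha Ha0.
  change (Rabs (a - 0) < d) in Ha. rewrite Rminus_0_r, Rabs_right in Ha; lra.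
Qed.

Lemma at_left_1_interval d : 0 < d -> at_left 1 (fun b => 1 - d < b < 1).
Proof.
  intros Hd. exists (mkposreal d Hd). intros b Hb Hb1.
  change (Rabs (b - 1) < d) in Hb. rewrite Rabs_left in Hb; lra.
Qed.

Lemma locally_interval01 x : 0 < x < 1 -> locally x (fun y => 0 < y < 1).
Proof.
  intros Hx. exists (mkposreal (Rmin x (1 - x)) ltac:(apply Rmin_glb_lt; lra)). intros y Hy.
  change (Rabs (y - x) < Rmin x (1 - x)) in Hy. apply Rabs_def2 in Hy.
  pose proof (Rmin_l x (1 - x)). pose proof (Rmin_r x (1 - x)). lra.
Qed.

Lemma filter_prod_inner01 :
  filter_prod (at_right 0) (at_left 1) (fun ab => 0 < fst ab < 1/2 /\ 1/2 < snd ab < 1).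
Proof.
  exists (fun a => 0 < a < 1/2) (fun b => 1 - 1/2 < b < 1).
  - apply at_right_0_interval; lra.
  - apply at_left_1_interval; lra.
  - simpl. intros a b Ha Hb. lra.
Qed.

Lemma filter_prod_inner01_imp (P : R * R -> Prop) :
  (forall a b, 0 < a < 1/2 -> 1/2 < b < 1 -> P (a, b)) ->
  filter_prod (at_right 0) (at_left 1) P.
Proof.
  intros HP. eapply filter_imp; [|exact filter_prod_inner01]. intros [a b] [Ha Hb]. now apply HP.
Qed.

Lemma continuous01_mult f g :
  continuous01 f -> continuous01 g -> continuous01 (fun x => f x * g x).
Proof. intros Hf Hg x Hx. exact (continuous_mult f g x (Hf x Hx) (Hg x Hx)). Qed.

Lemma ex_RInt_continuous01 f a b :
  continuous01 f -> 0 < a < 1 -> 0 < b < 1 -> ex_RInt f a b.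
Proof.
  intros Hf Ha Hb. apply (@ex_RInt_continuous R_CompleteNormedModule).
  intros x [Hx1 Hx2]. apply Hf. unfold Rmin, Rmax in *. destruct Rle_dec; lra.
Qed.

Lemma is_RInt_continuous01 f a b :
  continuous01 f -> 0 < a < 1 -> 0 < b < 1 -> is_RInt f a b (RInt f a b).
Proof. intros Hf Ha Hb. apply (@RInt_correct R_CompleteNormedModule), ex_RInt_continuous01; auto. Qed.

Lemma RInt_Chasles_continuous01 f a b c :
  continuous01 f -> 0 < a < 1 -> 0 < b < 1 -> 0 < c < 1 ->
  RInt f a b + RInt f b c = RInt f a c.
Proof.
  intros Hf Ha Hb Hc.
  exact (RInt_Chasles f a b c (ex_RInt_continuous01 f a b Hf Ha Hb)
                               (ex_RInt_continuous01 f b c Hf Hb Hc)).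
Qed.

Lemma is_RInt01_ext f g l :
  (forall x, 0 < x < 1 -> f x = g x) -> is_RInt01 f l -> is_RInt01 g l.
Proof.
  intros Hfg. apply (is_RInt_gen_ext (Fa := at_right 0) (Fb := at_left 1) f g l).
  apply filter_prod_inner01_imp. simpl. intros a b Ha Hb x Hx. apply Hfg.
  rewrite Rmin_left, Rmax_right in Hx; lra.
Qed.

Lemma is_RInt01_scal f k l : is_RInt01 f l -> is_RInt01 (fun x => k * f x) (k * l).
Proof. apply (is_RInt_gen_scal f k l). Qed.

Lemma is_RInt01_plus f g lf lg :
  is_RInt01 f lf -> is_RInt01 g lg -> is_RInt01 (fun x => f x + g x) (lf + lg).
Proof. apply (is_RInt_gen_plus f g lf lg). Qed.

Lemma is_RInt01_minus f g lf lg :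
  is_RInt01 f lf -> is_RInt01 g lg -> is_RInt01 (fun x => f x - g x) (lf - lg).
Proof. apply (is_RInt_gen_minus f g lf lg). Qed.

Lemma is_RInt01_abs_le f g lf lg :
  (forall x, 0 < x < 1 -> Rabs (f x) <= g x) ->
  is_RInt01 f lf -> is_RInt01 g lg -> Rabs lf <= lg.
Proof.
  intros Hfg. apply (RInt_gen_norm f g lf lg).
  - apply filter_prod_inner01_imp. simpl. intros; lra.
  - apply filter_prod_inner01_imp. simpl. intros a b Ha Hb x Hx. apply Hfg. lra.
Qed.

Lemma is_RInt01_derive (F f : R -> R) :
  (forall x, 0 < x < 1 -> is_derive F x (f x)) -> continuous01 f ->
  continuous F 0 -> continuous F 1 -> is_RInt01 f (F 1 - F 0).
Proof.
  intros HF Hf HF0 HF1.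
  apply (is_RInt01_ext (Derive F)).
  { intros x Hx. now apply is_derive_unique, HF. }
  apply (is_RInt_gen_Derive (Fa := at_right 0) (Fb := at_left 1) F (F 0) (F 1)).
  - apply filter_prod_inner01_imp. simpl. intros a b Ha Hb x Hx. exists (f x). apply HF.
    rewrite Rmin_left, Rmax_right in Hx; lra.
  - apply filter_prod_inner01_imp. simpl. intros a b Ha Hb x Hx.
    rewrite Rmin_left, Rmax_right in Hx by lra.
    apply continuous_ext_loc with f; [|apply Hf; lra].
    eapply filter_imp; [|apply locally_interval01; lra].
    intros y Hy. symmetry. now apply is_derive_unique, HF.
  - exact (filterlim_filter_le_1 _ (filter_le_within (F := locally 0) _) HF0).
  - exact (filterlim_filter_le_1 _ (filter_le_within (F := locally 1) _) HF1).
Qed.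

Lemma is_RInt01_is_int01 f l : is_RInt01 f l -> is_int01 f l.
Proof.
  intros Hf eps Heps.
  destruct (Hf (ball l (mkposreal eps Heps)) (locally_ball _ _)) as [Q Rb HQ HR HQR].
  destruct HQ as [d1 Hd1]. destruct HR as [d2 Hd2].
  exists (Rmin d1 d2). split; [apply Rmin_glb_lt; apply cond_pos|].
  intros a b Ha Hb Hab. pose proof (Rmin_l d1 d2). pose proof (Rmin_r d1 d2).
  destruct (HQR a b) as [y [Hy Hly]].
  { apply Hd1; [|lra]. change (Rabs (a - 0) < d1). rewrite Rminus_0_r, Rabs_right; lra. }
  { apply Hd2; [|lra]. change (Rabs (b - 1) < d2). rewrite Rabs_left; lra. }
  exists (ex_RInt_Reals_0 f a b (ex_intro _ y Hy)).
  rewrite <- RInt_Reals, (is_RInt_unique f a b y Hy).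
  exact Hly.
Qed.

Lemma is_int2_of_is_RInt01 (f : R -> R -> R) (F : R -> R) l :
  (forall v, 0 < v < 1 -> is_RInt01 (fun u => f u v) (F v)) -> is_RInt01 F l -> is_int2 f l.
Proof.
  intros Hin Hout. exists F. split.
  - intros v Hv. now apply is_RInt01_is_int01, Hin.
  - now apply is_RInt01_is_int01.
Qed.

Lemma abs_RInt_le_dominated f g x y :
  continuous01 f -> continuous01 g -> (forall t, 0 < t < 1 -> Rabs (f t) <= g t) ->
  0 < x < 1 -> 0 < y < 1 -> Rabs (RInt f x y) <= Rabs (RInt g x y).
Proof.
  intros Hf Hg Hfg.
  assert (Hle : forall x y, 0 < x < 1 -> 0 < y < 1 -> x <= y ->
                  Rabs (RInt f x y) <= Rabs (RInt g x y)).
  { intros a b Ha Hb Hab.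
    eapply Rle_trans; [|apply Rle_abs].
    apply (norm_RInt_le f g a b); auto.
    - intros t Ht. apply Hfg. lra.
    - apply is_RInt_continuous01; auto.
    - apply is_RInt_continuous01; auto. }
  intros Hx Hy. destruct (Rle_dec x y) as [Hxy|Hxy]; [now apply Hle|].
  rewrite <- (opp_RInt_swap f), <- (opp_RInt_swap g) by (apply ex_RInt_continuous01; auto).
  unfold opp; simpl. rewrite !Rabs_Ropp. apply Hle; auto; lra.
Qed.

Lemma filter_prod_is_RInt_unique f : continuous01 f ->
  filter_prod (at_right 0) (at_left 1) (fun ab =>
    (exists y, is_RInt f (fst ab) (snd ab) y) /\
    forall y1 y2, is_RInt f (fst ab) (snd ab) y1 -> is_RInt f (fst ab) (snd ab) y2 -> y1 = y2).
Proof.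
  intros Hf. apply filter_prod_inner01_imp. simpl. intros a b Ha Hb. split.
  - exists (RInt f a b). apply is_RInt_continuous01; auto; lra.
  - intros y1 y2 H1 H2. now rewrite <- (is_RInt_unique f a b y1 H1), <- (is_RInt_unique f a b y2 H2).
Qed.

Lemma ex_RInt01_dominated f g lg :
  continuous01 f -> continuous01 g -> (forall x, 0 < x < 1 -> Rabs (f x) <= g x) ->
  is_RInt01 g lg -> exists l, is_RInt01 f l.
Proof.
  intros Hf Hg Hfg HIg.
  apply (filterlimi_locally_cauchy (F := filter_prod (at_right 0) (at_left 1))
           (fun ab => is_RInt f (fst ab) (snd ab)) (filter_prod_is_RInt_unique f Hf)).
  intros eps.
  destruct (proj2 (filterlimi_locally_cauchy (F := filter_prod (at_right 0) (at_left 1))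
           (fun ab => is_RInt g (fst ab) (snd ab)) (filter_prod_is_RInt_unique g Hg))
           (ex_intro _ lg HIg) (pos_div_2 eps)) as [P [[Q Rb HQ HR HQR] HP]].
  set (Q' := fun a => Q a /\ 0 < a < 1/2).
  set (R' := fun b => Rb b /\ 1 - 1/2 < b < 1).
  assert (Gcauchy : forall x y x' y', Q' x -> R' y -> Q' x' -> R' y' ->
            Rabs (RInt g x' y' - RInt g x y) < eps / 2).
  { intros x y x' y' [Hx Hx1] [Hy Hy1] [Hx' Hx1'] [Hy' Hy1'].
    apply (HP (x, y) (x', y') (HQR x y Hx Hy) (HQR x' y' Hx' Hy'));
      apply is_RInt_continuous01; auto; lra. }
  exists (fun ab => Q' (fst ab) /\ R' (snd ab)). split.
  { exists Q' R'; auto.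
    - apply filter_and; auto. apply at_right_0_interval; lra.
    - apply filter_and; auto. apply at_left_1_interval; lra. }
  intros [a b] [a' b'] [Ha Hb] [Ha' Hb'] u u' Hu Hu'; simpl in *.
  rewrite <- (is_RInt_unique f a b u Hu), <- (is_RInt_unique f a' b' u' Hu').
  change (Rabs (RInt f a' b' - RInt f a b) < eps).
  pose proof (proj2 Ha); pose proof (proj2 Hb); pose proof (proj2 Ha'); pose proof (proj2 Hb').
  rewrite <- (RInt_Chasles_continuous01 f a a' b), <- (RInt_Chasles_continuous01 f a' b' b)
    by (auto; lra).
  replace (RInt f a' b' - (RInt f a a' + (RInt f a' b' + RInt f b' b)))
    with (- (RInt f a a' + RInt f b' b)) by ring.
  rewrite Rabs_Ropp.
  eapply Rle_lt_trans; [apply Rabs_triang|].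
  pose proof (abs_RInt_le_dominated f g a a' Hf Hg Hfg ltac:(lra) ltac:(lra)).
  pose proof (abs_RInt_le_dominated f g b' b Hf Hg Hfg ltac:(lra) ltac:(lra)).
  pose proof (Gcauchy a b a' b Ha Hb Ha' Hb) as Ga.
  pose proof (Gcauchy a' b a' b' Ha' Hb Ha' Hb') as Gb.
  rewrite <- (RInt_Chasles_continuous01 g a a' b) in Ga by (auto; lra).
  rewrite <- (RInt_Chasles_continuous01 g a' b' b) in Gb by (auto; lra).
  replace (RInt g a' b - (RInt g a a' + RInt g a' b)) with (- RInt g a a') in Ga by ring.
  replace (RInt g a' b' - (RInt g a' b' + RInt g b' b)) with (- RInt g b' b) in Gb by ring.
  rewrite Rabs_Ropp in Ga, Gb. lra.
Qed.

Lemma asin_ge_1 x : 1 <= x -> asin x = PI / 2.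
Proof. intros Hx. unfold asin. repeat case Rle_dec; lra. Qed.

Lemma asin_le x y : -1 <= x -> x <= y -> y <= 1 -> asin x <= asin y.
Proof.
  intros Hx Hxy Hy. pose proof (asin_bound x). pose proof (asin_bound y).
  apply sin_incr_0; try lra. rewrite !sin_asin; lra.
Qed.

Lemma continuous_asin_1 : continuous asin 1.
Proof.
  apply filterlim_locally. intros eps. pose proof PI_RGT_0.
  set (t := PI / 2 - Rmin eps (PI / 2) / 2).
  assert (Ht : PI / 4 <= t < PI / 2).
  { pose proof (Rmin_r eps (PI / 2)). assert (0 < Rmin eps (PI / 2)).
    { apply Rmin_glb_lt; [apply cond_pos|lra]. }
    unfold t. lra. }
  assert (Hsin : sin t < 1) by (rewrite <- sin_PI2; apply sin_increasing_1; lra).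
  exists (mkposreal (1 - sin t) ltac:(lra)). intros x Hx.
  change (Rabs (x - 1) < 1 - sin t) in Hx. change (Rabs (asin x - asin 1) < eps).
  apply Rabs_def2 in Hx. rewrite asin_1.
  destruct (Rle_dec 1 x) as [H1|H1].
  - rewrite asin_ge_1, Rminus_eq_0, Rabs_R0 by lra. apply cond_pos.
  - pose proof (SIN_bound t). pose proof (asin_bound x).
    assert (t <= asin x) by (rewrite <- (asin_sin t) by lra; apply asin_le; lra).
    pose proof (Rmin_l eps (PI / 2)).
    rewrite Rabs_left1 by lra. unfold t in *. lra.
Qed.

Lemma continuous_asin x : -1 <= x <= 1 -> continuous asin x.
Proof.
  intros Hx. destruct (Req_dec x 1) as [->|H1]; [exact continuous_asin_1|].
  destruct (Req_dec x (-1)) as [->|H2].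
  - apply (continuous_ext (fun y => - asin (- y))).
    { intros y. now rewrite asin_opp, !Ropp_involutive. }
    apply (continuous_opp (fun y => asin (- y))), (continuous_comp Ropp asin).
    + apply continuity_pt_filterlim, continuity_pt_opp, continuity_pt_id.
    + replace (- (-1)) with 1 by ring. exact continuous_asin_1.
  - apply continuity_pt_filterlim, derivable_continuous_pt, derivable_pt_asin. lra.
Qed.

Lemma is_derive_asin x : -1 < x < 1 -> is_derive asin x (/ sqrt (1 - x²)).
Proof.
  intros Hx. apply is_derive_Reals, derive_pt_eq_1 with (derivable_pt_asin x Hx).
  rewrite derive_pt_asin. field. apply Rgt_not_eq, sqrt_lt_R0. unfold Rsqr. nra.
Qed.

Lemma continuous_of_ex_derive (f : R -> R) x : ex_derive f x -> continuous f x.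
Proof. apply (@ex_derive_continuous R_AbsRing R_NormedModule). Qed.

Definition beta_half_kernel (u : R) : R := / sqrt u * / sqrt (1 - u).

Lemma beta_half_kernel_pos u : 0 < u < 1 -> 0 < beta_half_kernel u.
Proof.
  intros Hu. unfold beta_half_kernel.
  apply Rmult_lt_0_compat; apply Rinv_0_lt_compat, sqrt_lt_R0; lra.
Qed.

Lemma continuous01_beta_half_kernel : continuous01 beta_half_kernel.
Proof.
  intros u Hu. apply continuous_of_ex_derive. unfold beta_half_kernel. auto_derive.
  repeat split; try lra; apply Rgt_not_eq, sqrt_lt_R0; lra.
Qed.

Lemma is_RInt01_beta_half_kernel : is_RInt01 beta_half_kernel PI.
Proof.
  replace PI with (asin (2 * 1 - 1) - asin (2 * 0 - 1)).
  2: { replace (2 * 0 - 1) with (Ropp 1) by ring. replace (2 * 1 - 1) with 1 by ring.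
       rewrite asin_opp, asin_1. field. }
  assert (Hcont : forall u, 0 <= u <= 1 -> continuous (fun u => asin (2 * u - 1)) u).
  { intros u Hu. apply (continuous_comp (fun u => 2 * u - 1) asin).
    - apply continuous_of_ex_derive. auto_derive. easy.
    - apply continuous_asin. lra. }
  apply (is_RInt01_derive (fun u => asin (2 * u - 1))).
  - intros u Hu.
    assert (Hdisc : sqrt (1 - (2 * u - 1)²) = 2 * (sqrt u * sqrt (1 - u))).
    { apply sqrt_lem_1. unfold Rsqr. nra.
      pose proof (sqrt_pos u); pose proof (sqrt_pos (1 - u)). nra.
      replace (2 * (sqrt u * sqrt (1 - u)) * (2 * (sqrt u * sqrt (1 - u))))
        with (4 * ((sqrt u * sqrt u) * (sqrt (1 - u) * sqrt (1 - u)))) by ring.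
      rewrite !sqrt_sqrt by lra. unfold Rsqr. ring. }
    evar (d : R). replace (beta_half_kernel u) with d.
    + apply (is_derive_comp asin (fun u => 2 * u - 1)); [apply is_derive_asin; lra|].
      auto_derive; [easy|]. reflexivity.
    + unfold d, scal; simpl; unfold mult; simpl. unfold beta_half_kernel. rewrite Hdisc.
      field. split; apply Rgt_not_eq, sqrt_lt_R0; lra.
  - exact continuous01_beta_half_kernel.
  - apply Hcont; lra.
  - apply Hcont; lra.
Qed.

Definition gamma_kernel (g : R) : R := beta_half_kernel g / (1 + g).

Definition gamma_primitive (x : R) : R := sqrt 2 * asin (sqrt (2 * x / (1 + x))).

Lemma continuous_gamma_primitive x : 0 <= x <= 1 -> continuous gamma_primitive x.
Proof.
  intros Hx.
  assert (Hq : 0 <= 2 * x / (1 + x) <= 1).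
  { split; [apply Rdiv_le_0_compat; lra|].
    apply Rmult_le_reg_r with (1 + x); [lra|]. field_simplify; lra. }
  apply (continuous_mult (fun _ => sqrt 2)); [apply continuous_const|].
  apply (continuous_comp (fun x => sqrt (2 * x / (1 + x))) asin).
  - apply continuous_sqrt_comp, continuous_of_ex_derive. auto_derive. lra.
  - apply continuous_asin. split; [pose proof (sqrt_pos (2 * x / (1 + x))); lra|].
    rewrite <- sqrt_1 at 2. apply sqrt_le_1_alt. lra.
Qed.

Lemma is_derive_gamma_primitive x : 0 < x < 1 -> is_derive gamma_primitive x (gamma_kernel x).
Proof.
  intros Hx. set (q := 2 * x / (1 + x)).
  assert (Hq : 0 < q < 1).
  { unfold q. split; [apply Rdiv_lt_0_compat; lra|].
    apply Rmult_lt_reg_r with (1 + x); [lra|]. field_simplify; lra. }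
  assert (Hprod : sqrt (1 - q) * sqrt q = sqrt 2 * (sqrt x * sqrt (1 - x)) / (1 + x)).
  { rewrite <- sqrt_mult by lra. apply sqrt_lem_1. nra.
    apply Rdiv_le_0_compat; [|lra].
    apply Rmult_le_pos; [apply sqrt_pos|apply Rmult_le_pos; apply sqrt_pos].
    replace (sqrt 2 * (sqrt x * sqrt (1 - x)) / (1 + x) * (sqrt 2 * (sqrt x * sqrt (1 - x)) / (1 + x)))
      with ((sqrt 2 * sqrt 2) * (sqrt x * sqrt x) * (sqrt (1 - x) * sqrt (1 - x)) / ((1 + x) * (1 + x)))
      by (field; lra).
    rewrite !sqrt_sqrt by lra. unfold q. field. lra. }
  assert (0 < sqrt q) by (apply sqrt_lt_R0; lra).
  assert (0 < sqrt (1 - q)) by (apply sqrt_lt_R0; lra).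
  evar (d : R). replace (gamma_kernel x) with d.
  - apply is_derive_scal, (is_derive_comp asin (fun x => sqrt (2 * x / (1 + x)))).
    + apply is_derive_asin. fold q. rewrite <- sqrt_1. pose proof (sqrt_lt_1_alt q 1). lra.
    + auto_derive; [split; [lra|split; [exact (proj1 Hq)|easy]]|reflexivity].
  - unfold d, scal; simpl; unfold mult; simpl.
    fold q. change (2 * x * / (1 + x)) with q. rewrite Rsqr_sqrt by lra.
    replace (sqrt 2 * ((2 * 1 * / (1 + x) + 2 * x * (- (1) * / ((1 + x) * (1 + x)))) *
                       / (2 * sqrt q) * / sqrt (1 - q)))
      with (sqrt 2 / ((1 + x) * (1 + x) * (sqrt (1 - q) * sqrt q))) by (field; repeat split; lra).
    rewrite Hprod. unfold gamma_kernel, beta_half_kernel.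
    assert (0 < sqrt x) by (apply sqrt_lt_R0; lra).
    assert (0 < sqrt (1 - x)) by (apply sqrt_lt_R0; lra).
    assert (0 < sqrt 2) by (apply sqrt_lt_R0; lra).
    field. lra.
Qed.

Lemma is_RInt01_gamma_kernel : is_RInt01 gamma_kernel (PI / sqrt 2).
Proof.
  replace (PI / sqrt 2) with (gamma_primitive 1 - gamma_primitive 0).
  2: { unfold gamma_primitive. replace (2 * 1 / (1 + 1)) with 1 by field.
       replace (2 * 0 / (1 + 0)) with 0 by field. rewrite sqrt_1, sqrt_0, asin_1, asin_0.
       assert (0 < sqrt 2) by (apply sqrt_lt_R0; lra).
       field_simplify; [|lra]. rewrite <- (sqrt_sqrt 2) at 2 by lra. field. lra. }
  apply is_RInt01_derive.
  - exact is_derive_gamma_primitive.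
  - intros x Hx. apply continuous_of_ex_derive. unfold gamma_kernel, beta_half_kernel. auto_derive.
    repeat split; try lra; apply Rgt_not_eq, sqrt_lt_R0; lra.
  - apply continuous_gamma_primitive; lra.
  - apply continuous_gamma_primitive; lra.
Qed.

Definition pow_neg_3_4 (v : R) : R := / (sqrt v * sqrt (sqrt v)).

Lemma pow_neg_3_4_pos v : 0 < v -> 0 < pow_neg_3_4 v.
Proof.
  intros Hv. unfold pow_neg_3_4.
  apply Rinv_0_lt_compat, Rmult_lt_0_compat; apply sqrt_lt_R0; [lra|apply sqrt_lt_R0; lra].
Qed.

Lemma continuous01_pow_neg_3_4 : continuous01 pow_neg_3_4.
Proof.
  intros v Hv. apply continuous_of_ex_derive. unfold pow_neg_3_4.
  assert (0 < sqrt v) by (apply sqrt_lt_R0; lra).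
  assert (0 < sqrt (sqrt v)) by (apply sqrt_lt_R0; lra).
  auto_derive. repeat split; try lra. nra.
Qed.

Lemma is_RInt01_pow_neg_3_4 : is_RInt01 pow_neg_3_4 4.
Proof.
  assert (Hcont : forall v, continuous (fun v => 4 * sqrt (sqrt v)) v).
  { intros v. apply (continuous_mult (fun _ => 4)); [apply continuous_const|].
    apply continuous_sqrt_comp, continuous_sqrt. }
  assert (Hder : forall v, 0 < v < 1 -> is_derive (fun v => 4 * sqrt (sqrt v)) v (pow_neg_3_4 v)).
  { intros v Hv. assert (0 < sqrt v) by (apply sqrt_lt_R0; lra).
    assert (0 < sqrt (sqrt v)) by (apply sqrt_lt_R0; lra).
    auto_derive; [repeat split; lra|]. unfold pow_neg_3_4. field. lra. }
  pose proof (is_RInt01_derive _ _ Hder continuous01_pow_neg_3_4 (Hcont 0) (Hcont 1)) as H.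
  cbv beta in H. rewrite sqrt_0, sqrt_0, sqrt_1, sqrt_1 in H.
  now replace (4 * 1 - 4 * 0) with 4 in H by ring.
Qed.

Lemma neg_ln_le_inv_sub_1 v : 0 < v -> - ln v <= / v - 1.
Proof.
  intros Hv. pose proof (exp_ineq1_le (ln (/ v))) as H.
  rewrite exp_ln, ln_Rinv in H by (try apply Rinv_0_lt_compat; lra). lra.
Qed.

Lemma neg_ln_le_pow_neg_1_4 v : 0 < v -> - ln v <= 4 / sqrt (sqrt v).
Proof.
  intros Hv. set (q := sqrt (sqrt v)).
  assert (Hq : 0 < q) by (apply sqrt_lt_R0, sqrt_lt_R0; lra).
  assert (E : v = q * q * (q * q)) by (unfold q; rewrite !sqrt_sqrt; [lra|lra|apply sqrt_pos]).
  rewrite E, !ln_mult by nra. pose proof (neg_ln_le_inv_sub_1 q Hq).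
  assert (0 < / q) by (apply Rinv_0_lt_compat; auto). unfold Rdiv. lra.
Qed.

(* The logarithmic singularity of [beta_half_kernel] at 0 is absorbed by the integrable [v^(-3/4)]. *)
Lemma beta_half_kernel_neg_ln_le v :
  0 < v < 1 -> beta_half_kernel v * (- ln v) <= 2 * beta_half_kernel v + 8 * pow_neg_3_4 v.
Proof.
  intros Hv. pose proof (beta_half_kernel_pos v Hv). pose proof (pow_neg_3_4_pos v ltac:(lra)).
  assert (0 <= - ln v) by (pose proof (ln_increasing v 1); rewrite ln_1 in *; lra).
  destruct (Rle_dec v (1/2)).
  - assert (Hs : / sqrt (1 - v) <= 2).
    { assert (1/2 <= sqrt (1 - v)) by (rewrite <- (sqrt_square (1/2)) by lra; apply sqrt_le_1_alt; lra).
      replace 2 with (/ (1/2)) by field. apply Rinv_le_contravar; lra. }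
    pose proof (neg_ln_le_pow_neg_1_4 v ltac:(lra)).
    assert (0 < sqrt v) by (apply sqrt_lt_R0; lra).
    assert (0 < sqrt (sqrt v)) by (apply sqrt_lt_R0; lra).
    assert (0 < / sqrt v) by (apply Rinv_0_lt_compat; lra).
    assert (0 < / sqrt (1 - v)) by (apply Rinv_0_lt_compat, sqrt_lt_R0; lra).
    assert (beta_half_kernel v * (- ln v) <= / sqrt v * 2 * (4 / sqrt (sqrt v))).
    { unfold beta_half_kernel. apply Rmult_le_compat; nra. }
    assert (/ sqrt v * 2 * (4 / sqrt (sqrt v)) = 8 * pow_neg_3_4 v)
      by (unfold pow_neg_3_4; field; lra).
    lra.
  - pose proof (neg_ln_le_inv_sub_1 v ltac:(lra)).
    assert (/ v <= 2) by (replace 2 with (/ (1/2)) by field; apply Rinv_le_contravar; lra).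
    nra.
Qed.

Definition log_moment (r v : R) : R :=
  RInt_gen (fun u => beta_half_kernel u * ln (u + r * v)) (at_right 0) (at_left 1).

Definition ln_bound (r : R) : R := Rabs (ln r) + Rabs (ln (1 + r)).

Lemma abs_ln_shift_le r u v :
  0 < r -> 0 < u < 1 -> 0 < v < 1 -> Rabs (ln (u + r * v)) <= ln_bound r - ln v.
Proof.
  intros Hr Hu Hv. unfold ln_bound.
  assert (Hlo : ln r + ln v <= ln (u + r * v)) by (rewrite <- ln_mult by lra; apply ln_le; nra).
  assert (Hhi : ln (u + r * v) <= ln (1 + r)) by (apply ln_le; nra).
  assert (ln v < 0) by (rewrite <- ln_1; apply ln_increasing; lra).
  pose proof (Rle_abs (ln r)); pose proof (Rle_abs (- ln r)); pose proof (Rabs_pos (ln (1 + r))).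
  pose proof (Rle_abs (ln (1 + r))). rewrite Rabs_Ropp in *. apply Rabs_le. lra.
Qed.

Lemma abs_ln_shift_sub_le r u v v' : 0 < r -> 0 <= u -> 0 < v -> 0 < v' ->
  Rabs (ln (u + r * v) - ln (u + r * v')) <= Rabs (ln v - ln v').
Proof.
  intros Hr Hu.
  assert (Hmono : forall x y, 0 < x -> x <= y ->
            0 <= ln (u + r * y) - ln (u + r * x) <= ln y - ln x).
  { intros x y Hx Hxy. split.
    - assert (ln (u + r * x) <= ln (u + r * y)) by (apply ln_le; nra). lra.
    - assert (u * x <= u * y) by (apply Rmult_le_compat_l; lra).
      assert (0 < r * x) by nra.
      assert (L : ln ((u + r * y) * x) <= ln ((u + r * x) * y))
        by (apply ln_le; [apply Rmult_lt_0_compat|]; nra).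
      rewrite !ln_mult in L by nra. lra. }
  intros Hv Hv'. destruct (Rle_dec v v').
  - pose proof (Hmono v v' Hv r0). rewrite Rabs_minus_sym, Rabs_right, Rabs_minus_sym, Rabs_right; lra.
  - pose proof (Hmono v' v Hv' ltac:(lra)). rewrite !Rabs_right; lra.
Qed.

Lemma is_RInt01_log_moment r v : 0 < r -> 0 < v < 1 ->
  is_RInt01 (fun u => beta_half_kernel u * ln (u + r * v)) (log_moment r v).
Proof.
  intros Hr Hv.
  enough (Hex : exists l, is_RInt01 (fun u => beta_half_kernel u * ln (u + r * v)) l)
    by exact (RInt_gen_correct _ Hex).
  apply (ex_RInt01_dominated _ (fun u => (ln_bound r - ln v) * beta_half_kernel u)
           ((ln_bound r - ln v) * PI)).
  - apply continuous01_mult; [exact continuous01_beta_half_kernel|].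
    intros u Hu. apply continuous_of_ex_derive. auto_derive. nra.
  - apply continuous01_mult; [intros u Hu; apply continuous_const|exact continuous01_beta_half_kernel].
  - intros u Hu. pose proof (beta_half_kernel_pos u Hu).
    rewrite Rabs_mult, (Rabs_right (beta_half_kernel u)), Rmult_comm by lra.
    apply Rmult_le_compat_r; [lra|]. now apply abs_ln_shift_le.
  - apply is_RInt01_scal, is_RInt01_beta_half_kernel.
Qed.

Lemma abs_log_moment_le r v :
  0 < r -> 0 < v < 1 -> Rabs (log_moment r v) <= (ln_bound r - ln v) * PI.
Proof.
  intros Hr Hv.
  apply (is_RInt01_abs_le (fun u => beta_half_kernel u * ln (u + r * v))
           (fun u => (ln_bound r - ln v) * beta_half_kernel u)).
  - intros u Hu. pose proof (beta_half_kernel_pos u Hu).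
    rewrite Rabs_mult, (Rabs_right (beta_half_kernel u)), Rmult_comm by lra.
    apply Rmult_le_compat_r; [lra|]. now apply abs_ln_shift_le.
  - now apply is_RInt01_log_moment.
  - exact (is_RInt01_scal _ _ _ is_RInt01_beta_half_kernel).
Qed.

Lemma abs_log_moment_sub_le r v v' : 0 < r -> 0 < v < 1 -> 0 < v' < 1 ->
  Rabs (log_moment r v - log_moment r v') <= Rabs (ln v - ln v') * PI.
Proof.
  intros Hr Hv Hv'.
  apply (is_RInt01_abs_le
           (fun u => beta_half_kernel u * ln (u + r * v) - beta_half_kernel u * ln (u + r * v'))
           (fun u => Rabs (ln v - ln v') * beta_half_kernel u)).
  - intros u Hu. pose proof (beta_half_kernel_pos u Hu).
    rewrite <- Rmult_minus_distr_l, Rabs_mult, (Rabs_right (beta_half_kernel u)), Rmult_comm by lra.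
    apply Rmult_le_compat_r; [lra|]. apply abs_ln_shift_sub_le; lra.
  - apply is_RInt01_minus; now apply is_RInt01_log_moment.
  - exact (is_RInt01_scal _ _ _ is_RInt01_beta_half_kernel).
Qed.

Lemma continuous01_log_moment r : 0 < r -> continuous01 (log_moment r).
Proof.
  intros Hr v Hv. apply filterlim_locally. intros eps. pose proof PI_RGT_0.
  assert (Hln : continuous ln v) by (apply continuous_of_ex_derive; auto_derive; lra).
  assert (Heps : 0 < eps / PI) by (apply Rdiv_lt_0_compat; [apply cond_pos|lra]).
  pose proof (proj1 (filterlim_locally _ _) Hln (mkposreal _ Heps)) as Hln'.
  eapply filter_imp; [|exact (filter_and _ _ (locally_interval01 v Hv) Hln')].
  intros y [Hy Hlny]. change (Rabs (log_moment r y - log_moment r v) < eps).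
  change (Rabs (ln y - ln v) < eps / PI) in Hlny.
  pose proof (abs_log_moment_sub_le r y v Hr Hy Hv).
  apply (Rmult_lt_compat_r PI) in Hlny; [|lra].
  replace (eps / PI * PI) with (pos eps) in Hlny by (field; lra). lra.
Qed.

Lemma ex_RInt01_beta_half_kernel_log_moment r :
  0 < r -> exists l, is_RInt01 (fun v => beta_half_kernel v * log_moment r v) l.
Proof.
  intros Hr. pose proof PI_RGT_0.
  apply (ex_RInt01_dominated _
           (fun v => PI * (ln_bound r + 2) * beta_half_kernel v + 8 * PI * pow_neg_3_4 v)
           (PI * (ln_bound r + 2) * PI + 8 * PI * 4)).
  - apply continuous01_mult; [exact continuous01_beta_half_kernel|now apply continuous01_log_moment].
  - intros v Hv. apply (continuous_plus (fun v => PI * (ln_bound r + 2) * beta_half_kernel v)).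
    + apply (continuous01_mult (fun _ => PI * (ln_bound r + 2))); auto.
      * intros x Hx. apply continuous_const.
      * exact continuous01_beta_half_kernel.
    + apply (continuous01_mult (fun _ => 8 * PI)); auto.
      * intros x Hx. apply continuous_const.
      * exact continuous01_pow_neg_3_4.
  - intros v Hv. pose proof (beta_half_kernel_pos v Hv).
    rewrite Rabs_mult, (Rabs_right (beta_half_kernel v)) by lra.
    pose proof (abs_log_moment_le r v Hr Hv). pose proof (beta_half_kernel_neg_ln_le v Hv).
    apply Rle_trans with (beta_half_kernel v * ((ln_bound r - ln v) * PI));
      [apply Rmult_le_compat_l; lra|].
    assert (PI * (beta_half_kernel v * - ln v) <= PI * (2 * beta_half_kernel v + 8 * pow_neg_3_4 v))
      by (apply Rmult_le_compat_l; lra).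
    lra.
  - apply is_RInt01_plus; apply is_RInt01_scal.
    + exact is_RInt01_beta_half_kernel.
    + exact is_RInt01_pow_neg_3_4.
Qed.

Lemma exp_ln_half x : 0 < x -> exp (ln x / 2) = sqrt x.
Proof.
  intros Hx. symmetry. apply sqrt_lem_1; [lra|apply Rlt_le, exp_pos|].
  rewrite <- exp_plus. replace (ln x / 2 + ln x / 2) with (ln x) by field. now apply exp_ln.
Qed.

Definition h_gamma_denom (g : R) : R := g * (1 - g) * (1 + g) ^ 2.

Lemma h_gamma_denom_pos g : 0 < g < 1 -> 0 < h_gamma_denom g.
Proof.
  intros Hg. unfold h_gamma_denom. pose proof (pow_lt (1 + g) 2 ltac:(lra)).
  repeat apply Rmult_lt_0_compat; lra.
Qed.

Lemma exp_half_sub_ln_h_gamma_denom c g :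
  0 < g < 1 -> exp ((c - ln (h_gamma_denom g)) / 2) = exp (c / 2) * gamma_kernel g.
Proof.
  intros Hg. pose proof (h_gamma_denom_pos g Hg).
  assert (0 < sqrt g) by (apply sqrt_lt_R0; lra).
  assert (0 < sqrt (1 - g)) by (apply sqrt_lt_R0; lra).
  assert (Hsqrt : sqrt (h_gamma_denom g) = sqrt g * sqrt (1 - g) * (1 + g)).
  { apply sqrt_lem_1; [lra|apply Rlt_le; repeat apply Rmult_lt_0_compat; lra|].
    unfold h_gamma_denom.
    replace (sqrt g * sqrt (1 - g) * (1 + g) * (sqrt g * sqrt (1 - g) * (1 + g)))
      with ((sqrt g * sqrt g) * (sqrt (1 - g) * sqrt (1 - g)) * (1 + g) ^ 2) by ring.
    rewrite !sqrt_sqrt by lra. ring. }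
  replace ((c - ln (h_gamma_denom g)) / 2) with (c / 2 + - (ln (h_gamma_denom g) / 2)) by field.
  rewrite exp_plus, exp_Ropp, exp_ln_half, Hsqrt by lra.
  unfold gamma_kernel, beta_half_kernel. field. lra.
Qed.

Section Dallal.

Variables m0 m1 : nat.
Hypothesis Hm0 : (0 < m0)%nat.
Hypothesis Hm1 : (0 < m1)%nat.

Lemma sqrt_h_U_h_V u v : 0 < u < 1 -> 0 < v < 1 ->
  sqrt (h_U m0 u * h_V m1 v) = sqrt (INR m0 * INR m1) * beta_half_kernel u * beta_half_kernel v.
Proof.
  intros Hu Hv. pose proof (lt_0_INR _ Hm0). pose proof (lt_0_INR _ Hm1).
  assert (0 < sqrt u) by (apply sqrt_lt_R0; lra). assert (0 < sqrt (1 - u)) by (apply sqrt_lt_R0; lra).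
  assert (0 < sqrt v) by (apply sqrt_lt_R0; lra). assert (0 < sqrt (1 - v)) by (apply sqrt_lt_R0; lra).
  assert (0 < sqrt (INR m0 * INR m1)) by (apply sqrt_lt_R0; nra).
  apply sqrt_lem_1.
  - unfold h_U, h_V. apply Rmult_le_pos; apply Rdiv_le_0_compat; nra.
  - pose proof (beta_half_kernel_pos u Hu). pose proof (beta_half_kernel_pos v Hv).
    apply Rlt_le, Rmult_lt_0_compat; [apply Rmult_lt_0_compat|]; lra.
  - unfold h_U, h_V, beta_half_kernel.
    replace (sqrt (INR m0 * INR m1) * (/ sqrt u * / sqrt (1 - u)) * (/ sqrt v * / sqrt (1 - v)) *
             (sqrt (INR m0 * INR m1) * (/ sqrt u * / sqrt (1 - u)) * (/ sqrt v * / sqrt (1 - v))))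
      with (sqrt (INR m0 * INR m1) * sqrt (INR m0 * INR m1) /
            ((sqrt u * sqrt u) * (sqrt (1 - u) * sqrt (1 - u)) *
             ((sqrt v * sqrt v) * (sqrt (1 - v) * sqrt (1 - v))))) by (field; repeat split; lra).
    rewrite !sqrt_sqrt by nra. field. repeat split; lra.
Qed.

Lemma is_int2_sqrt_h_U_h_V :
  is_int2 (fun u v => sqrt (h_U m0 u * h_V m1 v)) (sqrt (INR m0 * INR m1) * PI * PI).
Proof.
  apply (is_int2_of_is_RInt01 _ (fun v => sqrt (INR m0 * INR m1) * beta_half_kernel v * PI)).
  - intros v Hv.
    apply (is_RInt01_ext (fun u => sqrt (INR m0 * INR m1) * beta_half_kernel v * beta_half_kernel u)).
    + intros u Hu. rewrite sqrt_h_U_h_V by auto. ring.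
    + exact (is_RInt01_scal _ _ _ is_RInt01_beta_half_kernel).
  - apply (is_RInt01_ext (fun v => sqrt (INR m0 * INR m1) * PI * beta_half_kernel v)).
    + intros v Hv. ring.
    + exact (is_RInt01_scal _ _ _ is_RInt01_beta_half_kernel).
Qed.

Lemma ln_h_gamma g u v : 0 < g < 1 -> 0 < u < 1 -> 0 < v < 1 ->
  ln (h_gamma m0 m1 g u v) =
  ln (2 * INR m0) + ln (u + INR m1 / INR m0 * v) - ln (h_gamma_denom g).
Proof.
  intros Hg Hu Hv. pose proof (lt_0_INR _ Hm0). pose proof (lt_0_INR _ Hm1).
  pose proof (h_gamma_denom_pos g Hg).
  assert (0 < INR m1 / INR m0 * v) by (apply Rmult_lt_0_compat; [apply Rdiv_lt_0_compat|]; lra).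
  unfold h_gamma. fold (h_gamma_denom g). unfold Rdiv at 1.
  rewrite ln_mult, ln_mult, ln_Rinv by (try apply Rinv_0_lt_compat; nra). ring.
Qed.

Lemma is_int2_ln_h_gamma Psi g :
  is_RInt01 (fun v => beta_half_kernel v * log_moment (INR m1 / INR m0) v) Psi -> 0 < g < 1 ->
  is_int2 (fun u v => sqrt (h_U m0 u * h_V m1 v) / (sqrt (INR m0 * INR m1) * PI * PI) *
                      ln (h_gamma m0 m1 g u v))
          (ln (2 * INR m0) + Psi / (PI * PI) - ln (h_gamma_denom g)).
Proof.
  intros HPsi Hg. pose proof PI_RGT_0.
  pose proof (lt_0_INR _ Hm0). pose proof (lt_0_INR _ Hm1).
  assert (Hr : 0 < INR m1 / INR m0) by (apply Rdiv_lt_0_compat; lra).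
  assert (0 < sqrt (INR m0 * INR m1)) by (apply sqrt_lt_R0; nra).
  set (C := ln (2 * INR m0) - ln (h_gamma_denom g)).
  apply (is_int2_of_is_RInt01 _
           (fun v => beta_half_kernel v / (PI * PI) * (C * PI + log_moment (INR m1 / INR m0) v))).
  - intros v Hv.
    apply (is_RInt01_ext (fun u => beta_half_kernel v / (PI * PI) *
             (C * beta_half_kernel u + beta_half_kernel u * ln (u + INR m1 / INR m0 * v)))).
    + intros u Hu. rewrite sqrt_h_U_h_V, ln_h_gamma by auto. unfold C. field. lra.
    + apply is_RInt01_scal, is_RInt01_plus.
      * exact (is_RInt01_scal _ _ _ is_RInt01_beta_half_kernel).
      * now apply is_RInt01_log_moment.
  - replace (ln (2 * INR m0) + Psi / (PI * PI) - ln (h_gamma_denom g))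
      with (C / PI * PI + / (PI * PI) * Psi) by (unfold C; field; lra).
    apply (is_RInt01_ext (fun v => C / PI * beta_half_kernel v +
             / (PI * PI) * (beta_half_kernel v * log_moment (INR m1 / INR m0) v))).
    + intros v Hv. field. lra.
    + apply is_RInt01_plus.
      * exact (is_RInt01_scal _ _ _ is_RInt01_beta_half_kernel).
      * exact (is_RInt01_scal _ _ _ HPsi).
Qed.

End Dallal.

Lemma pi_R_factorization g u v : 0 < g < 1 -> 0 < u < 1 -> 0 < v < 1 ->
  beta_half_kernel u * beta_half_kernel v / (PI * PI) * (gamma_kernel g / (PI / sqrt 2)) =
  pi_R g u v.
Proof.
  intros Hg Hu Hv. pose proof PI_RGT_0.
  assert (0 < sqrt 2) by (apply sqrt_lt_R0; lra).
  unfold pi_R, B_half_half, gamma_kernel, beta_half_kernel. field.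
  repeat split; try lra; apply Rgt_not_eq, sqrt_lt_R0; lra.
Qed.

Theorem mainTheorem4 (m0 m1 : nat) (Hm0 : (0 < m0)%nat) (Hm1 : (0 < m1)%nat) :
  exists Z : R,
    is_int2 (fun u v => sqrt (h_U m0 u * h_V m1 v)) Z /\ 0 < Z /\
    let pc := fun u v => sqrt (h_U m0 u * h_V m1 v) / Z in
    exists L : R -> R,
      (forall g : R, 0 < g < 1 ->
         is_int2 (fun u v => pc u v * ln (h_gamma m0 m1 g u v)) (L g)) /\
      exists N : R,
        is_int01 (fun g => exp (L g / 2)) N /\ 0 < N /\
        forall g u v : R, 0 < g < 1 -> 0 < u < 1 -> 0 < v < 1 ->
          pc u v * (exp (L g / 2) / N) = pi_R g u v.
Proof.
  pose proof PI_RGT_0. pose proof (lt_0_INR _ Hm0). pose proof (lt_0_INR _ Hm1).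
  assert (Hr : 0 < INR m1 / INR m0) by (apply Rdiv_lt_0_compat; lra).
  assert (Hs : 0 < sqrt (INR m0 * INR m1)) by (apply sqrt_lt_R0; nra).
  assert (0 < sqrt 2) by (apply sqrt_lt_R0; lra).
  destruct (ex_RInt01_beta_half_kernel_log_moment _ Hr) as [Psi HPsi].
  set (C := ln (2 * INR m0) + Psi / (PI * PI)).
  exists (sqrt (INR m0 * INR m1) * PI * PI). split; [|split].
  - exact (is_int2_sqrt_h_U_h_V m0 m1 Hm0 Hm1).
  - apply Rmult_lt_0_compat; [apply Rmult_lt_0_compat|]; lra.
  - intros pc. exists (fun g => C - ln (h_gamma_denom g)). split.
    + intros g Hg. exact (is_int2_ln_h_gamma m0 m1 Hm0 Hm1 Psi g HPsi Hg).
    + exists (exp (C / 2) * (PI / sqrt 2)). split; [|split].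
      * apply is_RInt01_is_int01, (is_RInt01_ext (fun g => exp (C / 2) * gamma_kernel g)).
        -- intros g Hg. symmetry. now apply exp_half_sub_ln_h_gamma_denom.
        -- exact (is_RInt01_scal _ _ _ is_RInt01_gamma_kernel).
      * pose proof (exp_pos (C / 2)). apply Rmult_lt_0_compat; [|apply Rdiv_lt_0_compat]; lra.
      * intros g u v Hg Hu Hv. pose proof (exp_pos (C / 2)).
        unfold pc. rewrite sqrt_h_U_h_V, exp_half_sub_ln_h_gamma_denom, <- pi_R_factorization by auto.
        field. lra.
Qed.
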